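(* For every $n\ge1$: if $Q_{2n}$ has a source cycle, then $Q_{4n}$ has a source cycle.
   Context: $Q_{2n}$ is realized as $G_{1,n}$: the graph on quaternary strings $q_1\cdots q_n$, $q_i\in\{0,1,2,3\}$, adjacent iff they differ in exactly one position by $\pm1\pmod4$; origin $\mathbf 0$. A permutation $\sigma$ of $\{1,\dots,n\}$ acts by $\sigma(q_1,\dots,q_n)=(q_{\sigma^{-1}(1)},\dots,q_{\sigma^{-1}(n)})$, an automorphism fixing $\mathbf 0$. A directed Hamilton cycle $H$ of $Q_{2n}$ starting at $\mathbf 0$ is a source cycle if there is an $n\times n$ Latin square $M=(m_{ij})$ on $\{1,\dots,n\}$ with first row the identity such that, with $\sigma_i(j)=m_{ij}$, the edge sets of $\sigma_1(H),\dots,\sigma_n(H)$ partition the edge set of $Q_{2n}$. *)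

From mathcomp Require Import all_boot all_order all_fingroup.
Set Implicit Arguments. Unset Strict Implicit. Unset Printing Implicit Defensive.

(* Vertices of G_{1,n} (= Q_{2n}): quaternary strings q_1...q_n,
   represented as functions 'I_n -> 'I_4 (positions indexed 0..n-1). *)
Definition vtx (n : nat) := {ffun 'I_n -> 'I_4}.

Definition origin (n : nat) : vtx n := [ffun => ord0].

Definition pm1 (a b : 'I_4) : bool :=
  ((a + 1) %% 4 == b) || ((b + 1) %% 4 == a).

Definition adj (n : nat) (u v : vtx n) : bool :=
  [exists k : 'I_n, pm1 (u k) (v k) && [forall j : 'I_n, (j != k) ==> (u j == v j)]].

Definition ham_cycle (n : nat) (H : seq (vtx n)) : Prop :=
  [/\ uniq H, size H = #|{: vtx n}|, head (origin n) H = origin n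
    & path.cycle (@adj n) H].

Definition cycle_edge (n : nat) (H : seq (vtx n)) (u v : vtx n) : bool :=
  ((u, v) \in zip H (rot 1 H)) || ((v, u) \in zip H (rot 1 H)).

Definition pact (n : nat) (s : {perm 'I_n}) (q : vtx n) : vtx n :=
  [ffun i => q ((s^-1)%g i)].

(* H is a source cycle: there is a Latin square M on {1..n} with first row
   the identity, whose rows are sigma_i (sigma_i(j) = m_ij), such that the
   edge sets of sigma_1(H), ..., sigma_n(H) partition the edge set of Q_{2n}. *)
Definition source_cycle (n : nat) (H : seq (vtx n)) : Prop :=
  ham_cycle H /\
  exists sigma : 'I_n -> {perm 'I_n},
    (* rows are permutations (built in); columns are injective: Latin *)
    (forall j : 'I_n, injective (fun i : 'I_n => sigma i j)) /\
    (forall i : 'I_n, val i = 0 -> forall j, sigma i j = j) /\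
    (forall u v : vtx n, adj u v ->
       #|[set i : 'I_n | cycle_edge (map (pact (sigma i)) H) u v]| = 1).

From mathcomp Require Import all_boot all_order all_fingroup.
From mathcomp Require Import zify.
Set Implicit Arguments. Unset Strict Implicit. Unset Printing Implicit Defensive.

(* A vertex of G_{1,2n} is a pair of vertices of G_{1,n} (its left and right
   halves), and G_{1,2n} is the Cartesian product of G_{1,n} with itself.  Let
   H = h_0 ... h_(N-1) be a source cycle of G_{1,n} (N = 4^n > 2) with Latin
   square rows sigma_0, ..., sigma_(n-1).
   - The doubled cycle walks the torus of pairs (h_A, h_B) diagonally: from
     (A, B) it steps to (A, B + 1) when A + B = -1 (mod N) and to (A + 1, B)
     otherwise, visiting (A, B) at time B * N + (A + B mod N).  This is a
     Hamilton cycle, and for every edge {A, A + 1} of the N-cycle and every E it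
     uses exactly one of the two torus edges {A, A + 1} x {E}, {E} x {A, A + 1}.
   - Row i of the doubled Latin square applies sigma_i to both halves, row n + i
     also exchanges the halves.  An edge of G_{1,2n} moves one half along an
     edge {u, v} of G_{1,n}; rows k and n + k pull it back to the two transposed
     torus edges over {sigma_k^-1 u, sigma_k^-1 v}, so it is covered exactly once,
     through the unique k such that sigma_k(H) contains {u, v}. *)

Section CyclicSequences.
Variable T : eqType.
Implicit Types (s : seq T) (p q : T).

Lemma nth_rot1 (z : T) s t : t < size s ->
  nth z (rot 1 s) t = nth z s (t.+1 %% size s).
Proof.
case: s => [|x s] //= lt_t; rewrite rot1_cons nth_rcons.
have [lt_ts | ge_ts] := ltnP t (size s); first by rewrite modn_small.
have -> : t = size s by lia.
by rewrite eqxx modnn.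
Qed.

Lemma cycle_nthP (e : rel T) (z : T) s :
  reflect (forall t, t < size s -> e (nth z s t) (nth z s (t.+1 %% size s)))
          (path.cycle e s).
Proof.
case: s => [|x s]; first by left.
have head_rot t : t < size (x :: s) -> nth z (x :: rot 1 (x :: s)) t = nth z (x :: s) t.
  by move=> lt_t; rewrite rot1_cons -rcons_cons nth_rcons lt_t.
rewrite /= -rot1_cons; apply: (iffP (pathP z)) => E t lt_t.
  by rewrite -nth_rot1 // -head_rot //; apply: E; rewrite size_rot.
rewrite size_rot in lt_t; rewrite head_rot // nth_rot1 //; exact: E.
Qed.

Lemma cycle_pairP (z : T) s p q :
  reflect (exists2 t, t < size s & nth z s t = p /\ nth z s (t.+1 %% size s) = q)
          ((p, q) \in zip s (rot 1 s)).
Proof.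
have size_zip_rot : size (zip s (rot 1 s)) = size s by rewrite size_zip size_rot minnn.
apply: (iffP (nthP (z, z))); rewrite size_zip_rot.
  by move=> [t lt_t]; rewrite nth_zip ?size_rot // nth_rot1 // => -[<- <-]; exists t.
by move=> [t lt_t [<- <-]]; exists t; rewrite ?nth_zip ?size_rot ?nth_rot1.
Qed.

Lemma cycle_pair_index s p q : uniq s ->
  ((p, q) \in zip s (rot 1 s)) =
  [&& p \in s, q \in s & index q s == (index p s).+1 %% size s].
Proof.
move=> uniq_s; apply/(cycle_pairP p)/and3P.
  move=> [t lt_t [<- <-]].
  have lt_t1 : t.+1 %% size s < size s by rewrite ltn_mod; lia.
  by rewrite !mem_nth // !index_uniq.
move=> [p_s q_s /eqP index_q]; exists (index p s); first by rewrite index_mem.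
by rewrite !nth_index // -index_q nth_index.
Qed.
End CyclicSequences.

Lemma mem_zip_map (T U : eqType) (f : T -> U) (s t : seq T) x y : injective f ->
  ((f x, f y) \in zip (map f s) (map f t)) = ((x, y) \in zip s t).
Proof.
move=> inj_f; elim: s t => [|a s IHs] [|b t] //=.
by rewrite !inE IHs !xpair_eqE !(inj_eq inj_f).
Qed.

Lemma adjP m (u v : vtx m) :
  reflect (exists2 k, pm1 (u k) (v k) & forall j, j != k -> u j = v j) (adj u v).
Proof.
apply: (iffP existsP) => [[k /andP [pm1_k /forallP eq_out]] | [k pm1_k eq_out]].
  by exists k => // j /(implyP (eq_out j)) /eqP.
by exists k; rewrite pm1_k; apply/forallP => j; apply/implyP => /eq_out ->.
Qed.

Lemma adj_irr m (u : vtx m) : ~~ adj u u.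
Proof.
apply/adjP => -[k pm1_k _]; move: pm1_k; rewrite /pm1.
by case: (u k) => [[|[|[|[|a]]]] ?].
Qed.

Lemma card_vtx m : #|{: vtx m}| = 4 ^ m.
Proof. by rewrite card_ffun !card_ord. Qed.

Lemma mem_full (T : finType) (s : seq T) : uniq s -> size s = #|T| -> forall x, x \in s.
Proof.
move=> uniq_s size_s x; apply/negPn/negP => s'x.
have uniq_xs : uniq (x :: s) by rewrite /= s'x uniq_s.
by have := max_card (mem (x :: s)); rewrite (card_uniqP uniq_xs) /= size_s ltnn.
Qed.

Section PermutationAction.
Variable n : nat.
Implicit Types (s : {perm 'I_n}) (H : seq (vtx n)).

Lemma pactE s q i : pact s q (s i) = q i.
Proof. by rewrite /pact ffunE permK. Qed.

Lemma pactK s : cancel (pact s) (pact s^-1).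
Proof. by move=> q; apply/ffunP => i; rewrite /pact !ffunE invgK permK. Qed.

Lemma pactKV s : cancel (pact s^-1) (pact s).
Proof. by move=> q; apply/ffunP => i; rewrite /pact !ffunE invgK permKV. Qed.

Lemma cycle_edge_pact s H u v :
  cycle_edge (map (pact s) H) u v = cycle_edge H (pact s^-1 u) (pact s^-1 v).
Proof.
have inj_pact := can_inj (pactK s).
by rewrite /cycle_edge -map_rot -[u](pactKV s) -[v](pactKV s) !mem_zip_map ?pactK.
Qed.
End PermutationAction.

Section Halves.
Variable n : nat.
Implicit Types (k : 'I_n) (j : 'I_(2 * n)) (u v : vtx n) (w : vtx (2 * n)).

Fact lpos_subproof k : k < 2 * n. Proof. by have := ltn_ord k; lia. Qed.
Fact rpos_subproof k : n + k < 2 * n. Proof. by have := ltn_ord k; lia. Qed.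
Definition lpos k : 'I_(2 * n) := Ordinal (lpos_subproof k).
Definition rpos k : 'I_(2 * n) := Ordinal (rpos_subproof k).

Fact hpos_subproof j : (if j < n then val j else j - n) < n.
Proof. by case: ifP => // _; have := ltn_ord j; lia. Qed.
Definition hpos j : 'I_n := Ordinal (hpos_subproof j).

Lemma lpos_lt k : lpos k < n. Proof. exact: (ltn_ord k). Qed.
Lemma rpos_lt k : (rpos k < n) = false. Proof. by rewrite /=; lia. Qed.
Lemma hpos_lpos k : hpos (lpos k) = k.
Proof. by apply: val_inj; rewrite /= ltn_ord. Qed.
Lemma hpos_rpos k : hpos (rpos k) = k.
Proof. by apply: val_inj; rewrite /= ifF; lia. Qed.

Variant half_spec j : bool -> Type :=
  | InLeft k of j = lpos k : half_spec j true
  | InRight k of j = rpos k : half_spec j false.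

Lemma halfP j : half_spec j (j < n).
Proof.
case: (boolP (j < n)) => [lt_jn | ge_jn].
  by apply: (InLeft (k := Ordinal lt_jn)); apply: val_inj.
have lt_jn : j - n < n by have := ltn_ord j; lia.
by apply: (InRight (k := Ordinal lt_jn)); apply: val_inj => /=; lia.
Qed.

Lemma lpos_inj : injective lpos. Proof. exact: can_inj hpos_lpos. Qed.
Lemma rpos_inj : injective rpos. Proof. exact: can_inj hpos_rpos. Qed.
Lemma lpos_neq_rpos k k' : lpos k != rpos k'.
Proof. by apply/eqP => eq_pos; have := lpos_lt k; rewrite eq_pos rpos_lt. Qed.

Lemma hpos_inj j j' : (j < n) = (j' < n) -> hpos j = hpos j' -> j = j'.
Proof.
case: halfP => k ->; case: halfP => k' -> //= _.
  by rewrite !hpos_lpos => ->.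
by rewrite !hpos_rpos => ->.
Qed.

Lemma card_halves (X Y : pred 'I_n) :
  #|[set j : 'I_(2 * n) | if j < n then X (hpos j) else Y (hpos j)]| = #|X| + #|Y|.
Proof.
set L := lpos @: [set k | X k]; set R := rpos @: [set k | Y k].
have notR k : (lpos k \in R) = false.
  by apply/negbTE/imsetP => -[k' _ /eqP]; rewrite (negbTE (lpos_neq_rpos _ _)).
have notL k : (rpos k \in L) = false.
  by apply/negbTE/imsetP => -[k' _ /eqP]; rewrite eq_sym (negbTE (lpos_neq_rpos _ _)).
have disjLR : [disjoint L & R].
  by rewrite disjoint_subset; apply/subsetP => _ /imsetP [k _ ->]; rewrite inE notR.
have -> : [set j : 'I_(2 * n) | if j < n then X (hpos j) else Y (hpos j)] = L :|: R.
  apply/setP => j; rewrite !inE; case: (halfP j) => k ->.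
    by rewrite hpos_lpos (mem_imset _ _ lpos_inj) inE notR orbF.
  by rewrite hpos_rpos (mem_imset _ _ rpos_inj) inE notL.
have [_] := leq_card_setU L R; rewrite disjLR => /eqP ->.
by rewrite !card_imset ?cardsE //; [exact: rpos_inj | exact: lpos_inj].
Qed.

Definition join u v : vtx (2 * n) :=
  [ffun j : 'I_(2 * n) => if j < n then u (hpos j) else v (hpos j)].
Definition lhalf w : vtx n := [ffun k => w (lpos k)].
Definition rhalf w : vtx n := [ffun k => w (rpos k)].

Lemma join_lpos u v k : join u v (lpos k) = u k.
Proof. by rewrite ffunE lpos_lt hpos_lpos. Qed.
Lemma join_rpos u v k : join u v (rpos k) = v k.
Proof. by rewrite ffunE rpos_lt hpos_rpos. Qed.

Lemma joinK w : join (lhalf w) (rhalf w) = w.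
Proof.
by apply/ffunP => j; case: (halfP j) => k ->; rewrite ?join_lpos ?join_rpos ffunE.
Qed.

Lemma join_inj u v u' v' : join u v = join u' v' -> u = u' /\ v = v'.
Proof.
move=> eq_join; split; apply/ffunP => k.
  by have := congr1 (fun w => w (lpos k)) eq_join; rewrite !join_lpos.
by have := congr1 (fun w => w (rpos k)) eq_join; rewrite !join_rpos.
Qed.

Lemma join_origin : join (origin n) (origin n) = origin (2 * n).
Proof. by apply/ffunP => j; rewrite !ffunE; case: ifP. Qed.

Lemma adj_join u1 u2 v1 v2 :
  adj (join u1 u2) (join v1 v2) =
  (adj u1 v1 && (u2 == v2)) || ((u1 == v1) && adj u2 v2).
Proof.
apply/adjP/orP => [[j] | ].
- case: (halfP j) => k ->; rewrite ?join_lpos ?join_rpos => pm1_k eq_out.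
  + left; apply/andP; split.
      apply/adjP; exists k => // k' ne_k.
      by have := eq_out (lpos k'); rewrite !join_lpos (inj_eq lpos_inj); apply.
    apply/eqP/ffunP => k'.
    by have := eq_out (rpos k'); rewrite !join_rpos eq_sym lpos_neq_rpos; apply.
  + right; apply/andP; split.
      apply/eqP/ffunP => k'.
      by have := eq_out (lpos k'); rewrite !join_lpos lpos_neq_rpos; apply.
    apply/adjP; exists k => // k' ne_k.
    by have := eq_out (rpos k'); rewrite !join_rpos (inj_eq rpos_inj); apply.
- case=> [/andP [/adjP [k pm1_k eq_out] /eqP <-] | /andP [/eqP <- /adjP [k pm1_k eq_out]]].
    exists (lpos k); rewrite ?join_lpos // => j.
    case: (halfP j) => k' ->; rewrite ?join_lpos ?join_rpos //.
    by rewrite (inj_eq lpos_inj); apply: eq_out.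
  exists (rpos k); rewrite ?join_rpos // => j.
  case: (halfP j) => k' ->; rewrite ?join_lpos ?join_rpos //.
  by rewrite (inj_eq rpos_inj); apply: eq_out.
Qed.
End Halves.

Section BlockPermutations.
Variable n : nat.
Implicit Types (s : {perm 'I_n}) (b c : bool) (j : 'I_(2 * n)) (u v : vtx n).

(* [blk s b] applies s inside each half, and exchanges the halves if b. *)
Definition blkf s b j : 'I_(2 * n) :=
  if (j < n) (+) b then lpos (s (hpos j)) else rpos (s (hpos j)).

Lemma blkf_lt s b j : (blkf s b j < n) = (j < n) (+) b.
Proof. by rewrite /blkf; case: ifP; rewrite ?lpos_lt ?rpos_lt. Qed.

Lemma hpos_blkf s b j : hpos (blkf s b j) = s (hpos j).
Proof. by rewrite /blkf; case: ifP; rewrite ?hpos_lpos ?hpos_rpos. Qed.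

Lemma blkf_inj s b : injective (blkf s b).
Proof.
move=> j j' eq_blk; apply: hpos_inj.
  by apply: (@addIb b); rewrite -(blkf_lt s) -(blkf_lt s) eq_blk.
by apply: (@perm_inj _ s); rewrite -(hpos_blkf s b) -(hpos_blkf s b) eq_blk.
Qed.

Definition blk s b : {perm 'I_(2 * n)} := perm (@blkf_inj s b).

Lemma blkE s b j : blk s b j = blkf s b j. Proof. exact: permE. Qed.

Lemma blkV s b : (blk s b)^-1%g = blk s^-1 b.
Proof.
apply/permP => j; apply: (@perm_inj _ (blk s b)); rewrite permKV !blkE.
apply: hpos_inj; first by rewrite !blkf_lt addbK.
by rewrite !hpos_blkf permKV.
Qed.

Definition join_if b u v := if b then join v u else join u v.

Lemma pact_blk s b c u v :
  pact (blk s b) (join_if c u v) = join_if (c (+) b) (pact s u) (pact s v).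
Proof.
apply/ffunP => i; rewrite -[i](permKV (blk s b)); move: ((blk s b)^-1 i)%g => j.
rewrite pactE blkE /blkf /join_if.
case: (halfP j) => k ->; case: b; case: c;
  by rewrite /= ?lpos_lt ?rpos_lt ?hpos_lpos ?hpos_rpos ?join_lpos ?join_rpos pactE.
Qed.

Lemma adj_split (w w' : vtx (2 * n)) : adj w w' ->
  exists b u v x, [/\ adj u v, w = join_if b u x & w' = join_if b v x].
Proof.
rewrite -(joinK w) -(joinK w') adj_join.
case/orP => [/andP [adj_l /eqP <-] | /andP [/eqP <- adj_r]].
  by exists false, (lhalf w), (lhalf w'), (rhalf w).
by exists true, (rhalf w), (rhalf w'), (lhalf w).
Qed.
End BlockPermutations.

Section DiagonalTorus.
Variable N : nat.

Lemma succ_mod A : A < N -> A.+1 %% N = if A.+1 == N then 0 else A.+1.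
Proof. by move=> lt_AN; case: eqP => [->|ne]; [exact: modnn | rewrite modn_small; lia]. Qed.

(* Cell (A, B) of the N x N torus is visited at time [ttime A B]; its
   coordinates are recovered from the time by [tcol] and [trow]. *)
Definition ttime A B := B * N + (A + B) %% N.
Definition tcol t := (t %% N + N - t %/ N) %% N.
Definition trow t := t %/ N.

Definition tnext A B :=
  if (A + B) %% N == N.-1 then (A, B.+1 %% N) else (A.+1 %% N, B).

Definition diag_step A B C E := ((C, E) == tnext A B) || ((A, B) == tnext C E).

Lemma tnext_horizontal A C E : A != C ->
  ((C, E) == tnext A E) = (C == A.+1 %% N) && ((A + E) %% N != N.-1).
Proof.
move=> /negbTE neq_AC; rewrite /tnext; case: ifP => _ /=.
  by rewrite xpair_eqE eq_sym neq_AC andbF.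
by rewrite xpair_eqE eqxx !andbT.
Qed.

Lemma tnext_vertical A C E : 1 < N -> E < N ->
  ((E, C) == tnext E A) = (C == A.+1 %% N) && ((A + E) %% N == N.-1).
Proof.
move=> N_gt1 lt_EN; rewrite /tnext addnC; case: ifP => _ /=.
  by rewrite xpair_eqE eqxx andbT.
rewrite xpair_eqE andbF; apply/negbTE/nandP; left.
by apply/eqP; rewrite (succ_mod lt_EN); case: eqP => ?; lia.
Qed.

Lemma succ_mod_asym A C : 2 < N -> A < N -> C < N ->
  ~~ ((C == A.+1 %% N) && (A == C.+1 %% N)).
Proof.
move=> N_gt2 lt_AN lt_CN; rewrite (succ_mod lt_AN) (succ_mod lt_CN).
by case: ifP => ?; case: ifP => ?; apply/negP => /andP [/eqP ? /eqP ?]; lia.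
Qed.

Lemma diag_step_split A C E : 2 < N -> A < N -> C < N -> E < N -> A != C ->
  (diag_step A E C E || diag_step E A E C) = (C == A.+1 %% N) || (A == C.+1 %% N)
  /\ ~~ (diag_step A E C E && diag_step E A E C).
Proof.
move=> N_gt2 lt_AN lt_CN lt_EN neq_AC; have neq_CA : C != A by rewrite eq_sym.
rewrite /diag_step (tnext_horizontal _ neq_AC) (tnext_horizontal _ neq_CA).
rewrite !tnext_vertical ?(ltnW N_gt2) // (addnC C); have := succ_mod_asym N_gt2 lt_AN lt_CN.
by case: (C == _); case: (A == _); case: ((A + E) %% N == _); case: ((E + C) %% N == _).
Qed.

Hypothesis N_gt0 : 0 < N.

Lemma ttime_lt A B : B < N -> ttime A B < N * N.
Proof. by move=> lt_BN; have := ltn_pmod (A + B) N_gt0; rewrite /ttime; nia. Qed.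

Lemma ttimeK A B : A < N -> B < N -> tcol (ttime A B) = A /\ trow (ttime A B) = B.
Proof.
move=> lt_AN lt_BN; have lt_mod := ltn_pmod (A + B) N_gt0.
rewrite /tcol /trow /ttime divnMDl // modnMDl (divn_small lt_mod) modn_mod addn0.
have le_BN := ltnW lt_BN.
by split=> //; rewrite -addnBA // modnDml -addnA subnKC // modnDr modn_small.
Qed.

Lemma tcolK t : t < N * N ->
  [/\ tcol t < N, trow t < N & ttime (tcol t) (trow t) = t].
Proof.
move=> lt_t; have lt_row : trow t < N by rewrite /trow ltn_divLR.
split=> //; first by rewrite ltn_mod.
have le_row : trow t <= t %% N + N by rewrite ltnW // ltn_addl.
rewrite /ttime /tcol modnDml -/(trow t) subnK //.
by rewrite modnDr modn_mod /trow -divn_eq.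
Qed.

Lemma ttime_eq A B C E : A < N -> B < N -> C < N -> E < N ->
  (ttime A B == ttime C E) = ((A, B) == (C, E)).
Proof.
move=> lt_AN lt_BN lt_CN lt_EN; apply/eqP/eqP => [eq_t | [-> ->]] //.
move: (ttimeK lt_AN lt_BN) (ttimeK lt_CN lt_EN); rewrite eq_t.
by move=> [-> ->] [-> ->].
Qed.

Lemma tnext_lt A B : A < N -> B < N -> (tnext A B).1 < N /\ (tnext A B).2 < N.
Proof. by move=> lt_AN lt_BN; rewrite /tnext; case: ifP => _ /=; rewrite ltn_mod. Qed.

Lemma ttime_next A B : A < N -> B < N ->
  (ttime A B).+1 %% (N * N) = ttime (tnext A B).1 (tnext A B).2.
Proof.
move=> lt_AN lt_BN; have lt_mod := ltn_pmod (A + B) N_gt0.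
have modS x : x.+1 %% N = (x %% N).+1 %% N by rewrite -addn1 -[(x %% N).+1]addn1 modnDml.
rewrite /tnext /ttime; case: eqP => diag /=.
- have climb : (B * N + (A + B) %% N).+1 = B.+1 * N.
    by rewrite diag -addnS prednK // mulSn addnC.
  rewrite climb; case: (ltnP B.+1 N) => [lt_B1 | ge_B1].
    rewrite (modn_small lt_B1) addnS modS diag prednK // modnn addn0.
    by rewrite modn_small // ltn_pmul2r.
  have eB : B = N.-1 by lia.
  have eA : A = 0.
    case: A lt_AN diag {lt_mod climb} => [|A] // lt_AN.
    by rewrite eB addSn -addnS prednK // modnDr modn_small; lia.
  by rewrite eB eA prednK // !modnn mul0n !add0n mod0n.
- have lt_mod1 : ((A + B) %% N).+1 < N by lia.
  rewrite modnDml addSn modS (modn_small lt_mod1) -addnS modn_small //.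
  have le_rows : B.+1 * N <= N * N by rewrite leq_mul2r lt_BN orbT.
  by move: le_rows; rewrite mulSn; nia.
Qed.
End DiagonalTorus.

Section DiagonalCycle.
Variable n : nat.
Hypothesis n_gt0 : 0 < n.
Variable H : seq (vtx n).
Hypothesis H_ham : ham_cycle H.

Let H_uniq : uniq H. Proof. by case: H_ham. Qed.
Let H_size : size H = #|{: vtx n}|. Proof. by case: H_ham. Qed.
Let H_full p : p \in H. Proof. exact: mem_full. Qed.

Local Notation N := (size H).
Local Notation h a := (nth (origin n) H a).

Let N_gt2 : 2 < N.
Proof.
rewrite H_size card_vtx -(subnK n_gt0) expnD.
by have := expn_gt0 4 (n - 1); lia.
Qed.

Let N_gt0 : 0 < N. Proof. exact: ltn_trans N_gt2. Qed.

Definition idx p := index p H.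

Lemma idx_lt p : idx p < N. Proof. by rewrite /idx index_mem. Qed.
Lemma idxK p : h (idx p) = p. Proof. by rewrite /idx nth_index. Qed.
Lemma nthK a : a < N -> idx (h a) = a.
Proof. by move=> lt_a; rewrite /idx index_uniq. Qed.
Lemma idx_inj : injective idx. Proof. exact: can_inj idxK. Qed.

Lemma cycle_edge_idx p q :
  cycle_edge H p q = (idx q == (idx p).+1 %% N) || (idx p == (idx q).+1 %% N).
Proof. by rewrite /cycle_edge !cycle_pair_index // !H_full. Qed.

Definition diag_vertex t := join (h (tcol N t)) (h (trow N t)).
Definition diag_cycle := mkseq diag_vertex (N * N).

Lemma diag_vertex_ttime A B : A < N -> B < N ->
  diag_vertex (ttime N A B) = join (h A) (h B).
Proof.
by move=> lt_A lt_B; rewrite /diag_vertex; have [-> ->] := ttimeK N_gt0 lt_A lt_B.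
Qed.

Lemma diag_cycle_uniq : uniq diag_cycle.
Proof.
apply/mkseq_uniqP => t t' lt_t lt_t' /join_inj [eq_col eq_row].
have [col_t row_t <-] := tcolK N_gt0 lt_t; have [col_t' row_t' <-] := tcolK N_gt0 lt_t'.
by move: eq_col eq_row => /(congr1 idx) /[!nthK] // -> /(congr1 idx) /[!nthK] // ->.
Qed.

Lemma diag_cycle_size : size diag_cycle = #|{: vtx (2 * n)}|.
Proof. by rewrite size_mkseq H_size !card_vtx mul2n -addnn expnD. Qed.

Lemma diag_cycle_full w : w \in diag_cycle.
Proof. exact: (mem_full diag_cycle_uniq diag_cycle_size). Qed.

Lemma index_diag_cycle p q :
  index (join p q) diag_cycle = ttime N (idx p) (idx q).
Proof.
have lt_t := ttime_lt N_gt0 (idx p) (idx_lt q).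
rewrite -{1}(idxK p) -{1}(idxK q) -diag_vertex_ttime ?idx_lt //.
rewrite -(nth_mkseq (origin _) diag_vertex lt_t).
by rewrite index_uniq ?size_mkseq ?diag_cycle_uniq.
Qed.

Lemma diag_cycle_step p1 p2 q1 q2 :
  ((join p1 p2, join q1 q2) \in zip diag_cycle (rot 1 diag_cycle)) =
  ((idx q1, idx q2) == tnext N (idx p1) (idx p2)).
Proof.
have [lt_next1 lt_next2] := tnext_lt N_gt0 (idx_lt p1) (idx_lt p2).
rewrite cycle_pair_index ?diag_cycle_uniq // !diag_cycle_full size_mkseq.
rewrite !index_diag_cycle.
by rewrite ttime_next ?idx_lt // ttime_eq ?idx_lt // -surjective_pairing.
Qed.

Lemma diag_cycle_edge p1 p2 q1 q2 :
  cycle_edge diag_cycle (join p1 p2) (join q1 q2) =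
  diag_step N (idx p1) (idx p2) (idx q1) (idx q2).
Proof. by rewrite /cycle_edge !diag_cycle_step. Qed.

Lemma diag_cycle_head : head (origin (2 * n)) diag_cycle = origin (2 * n).
Proof.
have [_ _ H_head _] := H_ham.
rewrite -nth0 nth_mkseq ?muln_gt0 ?N_gt0 // /diag_vertex /tcol /trow.
by rewrite mod0n div0n subn0 add0n modnn nth0 H_head join_origin.
Qed.

Lemma diag_cycle_adj : path.cycle (@adj (2 * n)) diag_cycle.
Proof.
have [_ _ _ H_cycle] := H_ham.
have adj_next a : a < N -> adj (h a) (h (a.+1 %% N)).
  by move=> lt_a; move/(cycle_nthP _ (origin n)): H_cycle; apply.
apply/(cycle_nthP _ (origin _)) => t; rewrite size_mkseq => lt_t.
have [lt_col lt_row eq_t] := tcolK N_gt0 lt_t.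
have [lt_next1 lt_next2] := tnext_lt N_gt0 lt_col lt_row.
rewrite !nth_mkseq ?ltn_mod ?muln_gt0 ?N_gt0 // -{2}eq_t ttime_next //.
rewrite diag_vertex_ttime // /diag_vertex adj_join.
move: lt_next1 lt_next2; rewrite /tnext; case: ifP => _ /= _ _.
  by rewrite eqxx adj_next ?orbT.
by rewrite eqxx adj_next.
Qed.

Lemma diag_cycle_ham : ham_cycle diag_cycle.
Proof.
split; [exact: diag_cycle_uniq | exact: diag_cycle_size |
        exact: diag_cycle_head | exact: diag_cycle_adj].
Qed.

Lemma diag_cycle_edge_split b p q w : p != q ->
  let X := cycle_edge diag_cycle (join_if b p w) (join_if b q w) in
  let Y := cycle_edge diag_cycle (join_if (~~ b) p w) (join_if (~~ b) q w) in
  (X || Y) = cycle_edge H p q /\ ~~ (X && Y).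
Proof.
move=> neq_pq; have neq_idx : idx p != idx q by apply: contra neq_pq => /eqP/idx_inj ->.
have [split_or split_and] := diag_step_split N_gt2 (idx_lt p) (idx_lt q) (idx_lt w) neq_idx.
by case: b; rewrite /join_if /= !diag_cycle_edge cycle_edge_idx -split_or // orbC andbC.
Qed.
End DiagonalCycle.

Section DoubledSquare.
Variable n : nat.
Variable sigma : 'I_n -> {perm 'I_n}.

(* Row i < n of the doubled square applies sigma_i to both halves; row n + i
   applies sigma_i and exchanges the halves. *)
Definition sigma2 (i : 'I_(2 * n)) : {perm 'I_(2 * n)} :=
  blk (sigma (hpos i)) (~~ (i < n)).

Lemma sigma2_col :
  (forall j, injective (fun i => sigma i j)) ->
  forall j, injective (fun i => sigma2 i j).
Proof.
move=> sigma_col j i i'; rewrite /= /sigma2 !blkE => eq_ij.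
apply: hpos_inj.
  have := blkf_lt (sigma (hpos i)) (~~ (i < n)) j.
  by rewrite eq_ij blkf_lt => /addbI /negb_inj.
have := hpos_blkf (sigma (hpos i)) (~~ (i < n)) j.
by rewrite eq_ij hpos_blkf => /(sigma_col (hpos j)).
Qed.

Lemma sigma2_row :
  (forall i, val i = 0 -> forall j, sigma i j = j) ->
  forall i, val i = 0 -> forall j, sigma2 i j = j.
Proof.
move=> sigma_row i i0 j; have lt_in : i < n by have := ltn_ord i; rewrite i0; lia.
rewrite /sigma2 blkE lt_in; apply: hpos_inj; first by rewrite blkf_lt addbF.
by rewrite hpos_blkf sigma_row //= lt_in.
Qed.

(* Each edge of G_{1,2n} lies in exactly one sigma2_i(diag_cycle H): it moves
   one half along an edge {u, v} of G_{1,n}; rows k and n + k pull it back to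
   the two placements of {sigma_k^-1 u, sigma_k^-1 v} in the doubled cycle, so
   exactly one of them carries it when sigma_k(H) carries {u, v}, and none
   otherwise (lemma diag_cycle_edge_split). *)
Lemma sigma2_edge (H : seq (vtx n)) : 0 < n -> ham_cycle H ->
  (forall u v : vtx n, adj u v ->
     #|[set i | cycle_edge (map (pact (sigma i)) H) u v]| = 1) ->
  forall u v : vtx (2 * n), adj u v ->
  #|[set i | cycle_edge (map (pact (sigma2 i)) (diag_cycle H)) u v]| = 1.
Proof.
move=> n_gt0 H_ham sigma_edge _ _ /adj_split [b [u [v [x [adj_uv -> ->]]]]].
have neq_uv : u != v by apply: contraTneq adj_uv => ->; exact: adj_irr.
pose s k := (sigma k)^-1%g.
pose place c k p := join_if c (pact (s k) p) (pact (s k) x).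
pose X k := cycle_edge (diag_cycle H) (place b k u) (place b k v).
pose Y k := cycle_edge (diag_cycle H) (place (~~ b) k u) (place (~~ b) k v).
have copy i :
    cycle_edge (map (pact (sigma2 i)) (diag_cycle H)) (join_if b u x) (join_if b v x) =
    if i < n then X (hpos i) else Y (hpos i).
  by rewrite cycle_edge_pact /sigma2 blkV !pact_blk; case: (i < n); rewrite ?addbF ?addbT.
have split k : (X k || Y k) = cycle_edge (map (pact (sigma k)) H) u v /\ ~~ (X k && Y k).
  rewrite cycle_edge_pact; apply: (diag_cycle_edge_split n_gt0 H_ham).
  by rewrite (inj_eq (can_inj (pactK (s k)))).
have -> : #|[set i | cycle_edge (map (pact (sigma2 i)) (diag_cycle H))
                        (join_if b u x) (join_if b v x)]| =
          #|[set i : 'I_(2 * n) | if i < n then X (hpos i) else Y (hpos i)]|.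
  by apply: eq_card => i; rewrite !inE copy.
rewrite card_halves -cardUI (@eq_card0 _ [predI X & Y]) ?addn0; last first.
  by move=> k; rewrite !inE; apply/negbTE; case: (split k).
rewrite -(sigma_edge u v adj_uv); apply: eq_card => k; rewrite !inE.
by case: (split k).
Qed.
End DoubledSquare.

Theorem corollary3 (n : nat) : 1 <= n ->
  (exists H : seq (vtx n), source_cycle H) ->
  exists H : seq (vtx (2 * n)), source_cycle H.
Proof.
move=> n_gt0 [H [H_ham [sigma [sigma_col [sigma_row sigma_edge]]]]].
exists (diag_cycle H); split; first exact: diag_cycle_ham.
exists (sigma2 sigma); split; [exact: sigma2_col | split].
- exact: sigma2_row.
- exact: sigma2_edge.
Qed.
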